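(* Let $c:\mathbb{R}^d\to[0,\infty)$ be a cost function, let $(\alpha_k)_{k\ge 1}$ be a sequence of real weights, and let $\lambda>0$. Consider the optimization problem $$\min_{K\ge 0}\ \min_{\bm{\beta}=(\beta_1,\dots,\beta_K)\in\mathcal{P}_K}\Big(c(\beta_K)+\lambda\sum_{k=1}^K\alpha_k c(\beta_k)\Big),$$ where $\beta_0=0$. If $K^*$ and $\bm{\beta}^*\in\mathcal{P}_{K^*}$ attain this minimum, then the model $\beta^*_{K^*}$ is Pareto-optimal with respect to the two objectives $c(\cdot)$ and $\mathcal{L}_\alpha(\cdot)$ on $\mathbb{R}^d$, i.e. there is no $\beta\in\mathbb{R}^d$ with $c(\beta)\le c(\beta^*_{K^*})$ and $\mathcal{L}_\alpha(\beta)\le\mathcal{L}_\alpha(\beta^*_{K^*})$ with at least one inequality strict.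
   Context: For $\beta\in\mathbb{R}^d$, let $\mathcal{S}(\beta)=\{\theta\in\mathbb{R}^d:\|\beta-\theta\|_0\le 1\}$. A coordinate path of length $K\ge 0$ is a sequence $\bm{\beta}=(\beta_1,\dots,\beta_K)$ with $\beta_k\in\mathcal{S}(\beta_{k-1})$ for $1\le k\le K$, where $\beta_0=0$. $\mathcal{P}_K$ is the set of coordinate paths of length $K$, $\mathcal{P}=\bigcup_{K\ge 0}\mathcal{P}_K$, and for a model $\beta$, $\mathcal{P}(\beta)$ is the set of paths whose last model is $\beta$ (for $\beta=0$ including the empty path). The path loss is $\mathcal{L}_\alpha(\bm{\beta})=\sum_{k=1}^{|\bm{\beta}|}\alpha_k c(\beta_k)$ (zero for the empty path), and the model loss is $\mathcal{L}_\alpha(\beta)=\min_{\bm{\beta}\in\mathcal{P}(\beta)}\mathcal{L}_\alpha(\bm{\beta})$. *)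

From HB Require Import structures.
From mathcomp Require Import all_boot all_order all_algebra.
From mathcomp Require Import boolp classical_sets reals constructive_ereal ereal.
Set Implicit Arguments. Unset Strict Implicit. Unset Printing Implicit Defensive.
Import Order.TTheory GRing.Theory Num.Theory.
Local Open Scope ring_scope.
Local Open Scope classical_set_scope.

Section CoordPaths.
Variables (R : realType) (d : nat).

Definition l0_dist (beta theta : 'rV[R]_d) : nat :=
  #|[pred i : 'I_d | beta ord0 i != theta ord0 i]|.

Definition coord_step (beta theta : 'rV[R]_d) : bool := (l0_dist beta theta <= 1)%N.

(* A coordinate path (beta_1, ..., beta_K) is a sequence with beta_k in S(beta_{k-1}),
   beta_0 = 0.  Its length is [size s]. *)
Definition is_coord_path (s : seq 'rV[R]_d) : bool := path coord_step 0 s.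

Definition coord_paths_of_length (K : nat) : set (seq 'rV[R]_d) :=
  [set s | is_coord_path s /\ size s = K].

(* Last model of a path; for the empty path it is beta_0 = 0. *)
Definition last_model (s : seq 'rV[R]_d) : 'rV[R]_d := last 0 s.

(* P(beta): paths whose last model is beta (the empty path belongs to P(0)). *)
Definition coord_paths_to (beta : 'rV[R]_d) : set (seq 'rV[R]_d) :=
  [set s | is_coord_path s /\ last_model s = beta].

(* path loss  L_alpha(bbeta) = sum_{k=1}^{|bbeta|} alpha_k c(beta_k)  (0 for empty path);
   alpha is indexed from 1: alpha k is alpha_k. *)
Definition path_loss (alpha : nat -> R) (c : 'rV[R]_d -> R) (s : seq 'rV[R]_d) : R :=
  \sum_(k < size s) alpha k.+1 * c (nth 0 s k).

(* model loss L_alpha(beta) = min over P(beta) of the path loss; taken as the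
   infimum in the extended reals (it coincides with the minimum whenever attained). *)
Definition model_loss (alpha : nat -> R) (c : 'rV[R]_d -> R) (beta : 'rV[R]_d) : \bar R :=
  ereal_inf [set (path_loss alpha c s)%:E | s in coord_paths_to beta].

Definition objective (alpha : nat -> R) (c : 'rV[R]_d -> R) (lambda : R)
  (s : seq 'rV[R]_d) : R :=
  c (last_model s) + lambda * path_loss alpha c s.

End CoordPaths.

From HB Require Import structures.
From mathcomp Require Import all_boot all_order all_algebra.
From mathcomp Require Import lra.
From mathcomp Require Import boolp classical_sets reals constructive_ereal ereal.
Set Implicit Arguments. Unset Strict Implicit. Unset Printing Implicit Defensive.
Import Order.TTheory GRing.Theory Num.Theory.
Local Open Scope ring_scope.
Local Open Scope classical_set_scope.

(* A minimiser of the scalarised objective c(last) + lambda L(path) bounds the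
   model loss of every model from below: any path s to beta has
   lambda L(s) >= lambda L(bstar) + c(last bstar) - c(beta).  At beta = last bstar
   this shows that bstar realises the model loss of its endpoint.  For a model
   beta with c(beta) <= c(last bstar) and loss at most L(bstar), the gap
   (c(last bstar) - c(beta)) / lambda is then both >= 0 and <= 0, so neither
   inequality can be strict. *)

Section ScalarizedMinimizer.
Variables (R : realType) (d : nat) (c : 'rV[R]_d -> R) (alpha : nat -> R).
Variables (lambda : R) (bstar : seq 'rV[R]_d).
Hypothesis lambda_gt0 : 0 < lambda.
Hypothesis bstar_min : forall s, is_coord_path s ->
  objective alpha c lambda bstar <= objective alpha c lambda s.

Local Notation L := (path_loss alpha c).
Local Notation bl := (last_model bstar).

Lemma model_loss_ge_scalarized beta :
  ((L bstar + (c bl - c beta) / lambda)%:E <= model_loss alpha c beta)%E.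
Proof.
apply/ereal_infP => _ [s [s_path <-] <-]; rewrite lee_fin.
have := bstar_min s_path; rewrite /objective => obj_le.
rewrite -(ler_pM2l lambda_gt0) mulrDr mulrCA divff ?gt_eqF // mulr1.
lra.
Qed.

Lemma model_loss_last_minimizer :
  is_coord_path bstar -> model_loss alpha c bl = (L bstar)%:E.
Proof.
move=> bstar_path; apply/eqP; rewrite eq_le; apply/andP; split.
  by apply: ereal_inf_lbound; exists bstar.
by have := model_loss_ge_scalarized bl; rewrite subrr mul0r addr0.
Qed.

End ScalarizedMinimizer.

Theorem proposition1 (R : realType) (d : nat) (c : 'rV[R]_d -> R)
  (alpha : nat -> R) (lambda : R)
  (c_ge0 : forall beta, 0 <= c beta) (lambda_gt0 : 0 < lambda)
  (Kstar : nat) (bstar : seq 'rV[R]_d)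
  (bstar_path : coord_paths_of_length Kstar bstar)
  (bstar_opt : forall (K : nat) (b : seq 'rV[R]_d),
      coord_paths_of_length K b ->
      objective alpha c lambda bstar <= objective alpha c lambda b) :
  ~ exists beta : 'rV[R]_d,
      [/\ c beta <= c (last_model bstar),
          (model_loss alpha c beta <= model_loss alpha c (last_model bstar))%E &
          c beta < c (last_model bstar) \/
          (model_loss alpha c beta < model_loss alpha c (last_model bstar))%E].
Proof.
have bstar_min s : is_coord_path s ->
    objective alpha c lambda bstar <= objective alpha c lambda s.
  by move=> s_path; apply: (bstar_opt (size s)).
case: bstar_path => bstar_path _ [beta [c_le loss_le strict]].
have lower := model_loss_ge_scalarized lambda_gt0 bstar_min beta.
rewrite (model_loss_last_minimizer lambda_gt0 bstar_min bstar_path) in loss_le strict.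
have gap_ge0 : 0 <= (c (last_model bstar) - c beta) / lambda.
  by rewrite divr_ge0 // ?subr_ge0 // ltW.
have := le_trans lower loss_le; rewrite lee_fin => gap_le0.
case: strict => [c_lt | loss_lt].
  have : 0 < (c (last_model bstar) - c beta) / lambda by rewrite divr_gt0 ?subr_gt0.
  lra.
have := le_lt_trans lower loss_lt; rewrite lte_fin; lra.
Qed.
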